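(* Let $r,s$ be real numbers with $s, r^2 \in \mathbb{Q}$ and $s \geq 3\sqrt{3}\, r > 0$. Let $C_{r,s}$ be the plane curve $$C_{r,s}\colon\ s(xy - r^2) = x^2 y + x y^2 .$$ Then the assignment $$(x_0,y_0) \mapsto (x_0+y_0,\ s-x_0,\ s-y_0)$$ is a bijection from the set of rational points $(x_0,y_0) \in \mathbb{Q}^2$ on $C_{r,s}$ with $x_0>0$ and $y_0>0$ onto the set of ordered triples $(\ell_1,\ell_2,\ell_3)$ of side lengths of rational Euclidean triangles having semiperimeter $s$ and inradius $r$.
   Context: A Euclidean triangle is called rational if its three side lengths $\ell_1,\ell_2,\ell_3$ are rational numbers. Its semiperimeter is $s=(\ell_1+\ell_2+\ell_3)/2$ and its inradius $r$ is the radius of its inscribed circle. ''Sequences of side lengths'' means ordered triples $(\ell_1,\ell_2,\ell_3)$ of positive reals that are the side lengths of a (nondegenerate) triangle. *)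

From Stdlib Require Import Reals QArith Qreals.
Open Scope R_scope.

Definition is_rat (x : R) : Prop := exists q : Q, Q2R q = x.

Definition is_triangle (l1 l2 l3 : R) : Prop :=
  0 < l1 /\ 0 < l2 /\ 0 < l3 /\
  l1 < l2 + l3 /\ l2 < l1 + l3 /\ l3 < l1 + l2.

Definition semiperimeter (l1 l2 l3 : R) : R := (l1 + l2 + l3) / 2.

(* Inradius = Area / s, with the area given by Heron's formula,
   i.e. r = sqrt((s-l1)(s-l2)(s-l3)/s). *)
Definition inradius (l1 l2 l3 : R) : R :=
  let s := semiperimeter l1 l2 l3 in
  sqrt ((s - l1) * (s - l2) * (s - l3) / s).

Definition rat_triangle_sr (r s : R) (t : R * R * R) : Prop :=
  let '(l1, l2, l3) := t in
  is_triangle l1 l2 l3 /\ is_rat l1 /\ is_rat l2 /\ is_rat l3 /\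
  semiperimeter l1 l2 l3 = s /\ inradius l1 l2 l3 = r.

Definition pos_rat_point (r s : R) (p : R * R) : Prop :=
  let '(x, y) := p in
  is_rat x /\ is_rat y /\ 0 < x /\ 0 < y /\
  s * (x * y - r ^ 2) = x ^ 2 * y + x * y ^ 2.

Definition curve_map (s : R) (p : R * R) : R * R * R :=
  let '(x, y) := p in (x + y, s - x, s - y).

From Stdlib Require Import Reals QArith Qreals Lra.
Open Scope R_scope.

(* With [l1 = x + y], [l2 = s - x], [l3 = s - y] one has [s - l1 = s - x - y],
   [s - l2 = x], [s - l3 = y], so the curve equation is Heron's relation
   [s r^2 = (s - l1)(s - l2)(s - l3)] in disguise. Positivity of that product
   forces the triangle inequalities, and the map is inverted by
   [(l1, l2, l3) |-> (s - l2, s - l3)]. The bound [s >= 3 sqrt 3 r] (the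
   condition for the curve to have real points in the positive quadrant) is
   only needed here to know that [s > 0]. *)

Lemma is_rat_add a b : is_rat a -> is_rat b -> is_rat (a + b).
Proof. intros [p <-] [q <-]. exists (p + q)%Q. apply Q2R_plus. Qed.

Lemma is_rat_sub a b : is_rat a -> is_rat b -> is_rat (a - b).
Proof. intros [p <-] [q <-]. exists (p - q)%Q. apply Q2R_minus. Qed.

Lemma curve_eq_heron r s x y :
  s * (x * y - r ^ 2) = x ^ 2 * y + x * y ^ 2 <->
  (s - (x + y)) * x * y = s * r ^ 2.
Proof. split; intros; nra. Qed.

Lemma semiperimeter_curve_map s x y :
  semiperimeter (x + y) (s - x) (s - y) = s.
Proof. unfold semiperimeter. field. Qed.

Lemma is_triangle_curve_map r s x y :
  0 < s -> 0 < r -> 0 < x -> 0 < y ->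
  (s - (x + y)) * x * y = s * r ^ 2 ->
  is_triangle (x + y) (s - x) (s - y).
Proof.
  intros hs hr hx hy heron.
  assert (hxy : 0 < x * y) by (apply Rmult_lt_0_compat; lra).
  assert (hsr2 : 0 < s * r ^ 2) by (apply Rmult_lt_0_compat; nra).
  assert (hlt : x + y < s) by nra.
  unfold is_triangle; lra.
Qed.

Lemma inradius_eq_iff_heron l1 l2 l3 s r :
  semiperimeter l1 l2 l3 = s ->
  0 < s -> 0 <= r -> 0 <= (s - l1) * (s - l2) * (s - l3) ->
  inradius l1 l2 l3 = r <-> (s - l1) * (s - l2) * (s - l3) = s * r ^ 2.
Proof.
  intros hsp hs hr hprod. unfold inradius. rewrite hsp.
  assert (hdiv : 0 <= (s - l1) * (s - l2) * (s - l3) / s)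
    by (unfold Rdiv; apply Rmult_le_pos; [lra | left; apply Rinv_0_lt_compat; lra]).
  split.
  - intros <-. rewrite pow2_sqrt by exact hdiv. field. lra.
  - intros heron.
    replace ((s - l1) * (s - l2) * (s - l3) / s) with (r ^ 2)
      by (rewrite heron; field; lra).
    apply sqrt_pow2; exact hr.
Qed.

Lemma curve_map_inj s p q : curve_map s p = curve_map s q -> p = q.
Proof.
  destruct p as [x y], q as [x' y']. simpl. intros h. injection h.
  intros. f_equal; lra.
Qed.

Theorem theorem1 (r s : R)
  (hs : is_rat s) (hr2 : is_rat (r ^ 2))
  (hrpos : 0 < r) (hsr : 3 * sqrt 3 * r <= s) :
  (forall p, pos_rat_point r s p -> rat_triangle_sr r s (curve_map s p)) /\
  (forall p q, pos_rat_point r s p -> pos_rat_point r s q ->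
     curve_map s p = curve_map s q -> p = q) /\
  (forall t, rat_triangle_sr r s t ->
     exists p, pos_rat_point r s p /\ curve_map s p = t).
Proof.
  assert (hspos : 0 < s).
  { assert (0 < sqrt 3) by (apply sqrt_lt_R0; lra).
    assert (0 < 3 * sqrt 3 * r) by (apply Rmult_lt_0_compat; lra). lra. }
  split; [|split].
  - intros [x y] (hx & hy & x0 & y0 & hc). simpl.
    apply curve_eq_heron in hc.
    pose proof (semiperimeter_curve_map s x y) as hsp.
    pose proof (is_triangle_curve_map r s x y hspos hrpos x0 y0 hc) as ht.
    repeat split; try apply ht; auto using is_rat_add, is_rat_sub.
    apply (inradius_eq_iff_heron _ _ _ s); [exact hsp | exact hspos | lra | |].
    + replace (s - (s - x)) with x by ring. replace (s - (s - y)) with y by ring.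
      rewrite hc. apply Rmult_le_pos; nra.
    + rewrite <- hc. ring.
  - intros p q _ _. apply curve_map_inj.
  - intros [[l1 l2] l3] (ht & h1 & h2 & h3 & hsp & hin).
    assert (hl1 : l1 = 2 * s - l2 - l3) by (unfold semiperimeter in hsp; lra).
    unfold is_triangle in ht.
    apply (inradius_eq_iff_heron _ _ _ s) in hin;
      [| exact hsp | exact hspos | lra | repeat apply Rmult_le_pos; lra].
    exists (s - l2, s - l3). split.
    + simpl. repeat split; auto using is_rat_sub; try lra.
      apply curve_eq_heron. rewrite <- hin, hl1. ring.
    + simpl. f_equal; [f_equal|]; lra.
Qed.
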